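(* Let $\sigma_1,\dots,\sigma_n$ be one-qubit pure states with Bloch vectors $s_1,\dots,s_n\in\mathbb{R}^3$ ($|s_i|=1$). For $a\in(0,1)$ put $\sigma_i(a)=\tfrac12 I+a(\sigma_i-\tfrac12 I)$ (the state with Bloch vector $a s_i$), and define $$A_i(a)=\{\rho\in\mathcal{S}^{\mathrm{faithful}} : D(\rho\|\sigma_i(a))\le D(\rho\|\sigma_j(a))\ \text{for all } j\},\qquad B_i(a)=\{\rho\in\mathcal{S}^{\mathrm{faithful}} : D(\sigma_i(a)\|\rho)\le D(\sigma_j(a)\|\rho)\ \text{for all } j\}.$$ Then for every $i$ the set limits $\lim_{a\to1}A_i(a)$ and $\lim_{a\to 1}B_i(a)$ exist, and the following six subsets of the set $\mathcal{S}^{\mathrm{pure}}$ of one-qubit pure states coincide: (1) $\{\rho\in\mathcal{S}^{\mathrm{pure}}: d_{\mathrm{FS}}(\rho,\sigma_i)\le d_{\mathrm{FS}}(\rho,\sigma_j)\ \forall j\}$; (2) $\{\rho\in\mathcal{S}^{\mathrm{pure}}: d_{\mathrm{B}}(\rho,\sigma_i)\le d_{\mathrm{B}}(\rho,\sigma_j)\ \forall j\}$; (3) the set of pure $\rho$ whose Bloch vector $x$ satisfies $\arccos(x\cdot s_i)\le \arccos(x\cdot s_j)$ for all $j$ (Voronoi region on the unit sphere for the geodesic distance); (4) the set of pure $\rho$ whose Bloch vector $x$ satisfies $|x-s_i|\le |x-s_j|$ for all $j$ (section of the 3-dimensional Euclidean Voronoi diagram with the sphere); (5) $\mathrm{Closure}(\lim_{a\to1}A_i(a))\cap\mathcal{S}^{\mathrm{pure}}$;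 (6) $\mathrm{Closure}(\lim_{a\to1}B_i(a))\cap\mathcal{S}^{\mathrm{pure}}$. That is, the Voronoi diagrams of these sites in the space of pure states with respect to the Fubini–Study distance, the Bures distance, the geodesic distance on the sphere, the Euclidean distance, and the two divergences all coincide.
   Context: A one-qubit state is a $2\times2$ density matrix (Hermitian, trace one, positive semidefinite), parameterized by its Bloch vector $(x,y,z)\in\mathbb{R}^3$, $x^2+y^2+z^2\le 1$, via $\rho=\begin{pmatrix}\frac{1+z}{2}&\frac{x-iy}{2}\\ \frac{x+iy}{2}&\frac{1-z}{2}\end{pmatrix}$. $\mathcal{S}$ is the set of all such states; $\rho$ is pure iff $\mathrm{rank}\,\rho=1$ (iff $|(x,y,z)|=1$), and faithful iff $\mathrm{rank}\,\rho=2$ (iff $|(x,y,z)|<1$); $\mathcal{S}^{\mathrm{pure}},\mathcal{S}^{\mathrm{faithful}}$ denote the corresponding subsets. The quantum divergence is $D(\sigma\|\rho)=\mathrm{Tr}\,\sigma(\log\sigma-\log\rho)$, defined when $\rho$ is faithful, with the convention $0\log0=0$; matrix functions are applied to eigenvalues. For pure $\rho,\sigma$ the Fubini–Study distance $d_{\mathrm{FS}}(\rho,\sigma)\in[0,\pi/2]$ is defined by $\cos d_{\mathrm{FS}}(\rho,\sigma)=\sqrt{\mathrm{Tr}(\rho\sigma)}$. The Bures distance is $d_{\mathrm{B}}(\rho,\sigma)=\sqrt{1-\mathrm{Tr}\sqrt{\sqrt{\sigma}\rho\sqrt{\sigma}}}$. $\mathrm{Closure}$ denotes topological closure in $\mathcal{S}$.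 *)

From HB Require Import structures.
From mathcomp Require Import all_boot all_order all_algebra.
From mathcomp Require Import all_classical all_reals all_analysis.
From mathcomp Require Import complex.
Set Implicit Arguments. Unset Strict Implicit. Unset Printing Implicit Defensive.
Import Order.TTheory GRing.Theory Num.Theory ComplexField.
Import numFieldNormedType.Exports.
Local Open Scope classical_set_scope.
Local Open Scope ring_scope.
Local Open Scope complex_scope.

Section Qubit.
Variable R : realType.

(* Bloch vectors (x,y,z) are row vectors of length 3, coordinates 0,1,2. *)
Definition dot3 (u v : 'rV[R]_3) : R := \sum_(k < 3) u 0 k * v 0 k.
Definition enorm3 (u : 'rV[R]_3) : R := Num.sqrt (dot3 u u).

Definition density (v : 'rV[R]_3) : 'M[R[i]]_2 :=
  let x := v 0 0 in let y := v 0 1 in let z := v 0 2%:R in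
  \matrix_(k < 2, l < 2)
    if (k == 0) && (l == 0) then ((1 + z) / 2)%:C
    else if (k == 0) && (l == 1) then Complex (x / 2) (- (y / 2))
    else if (k == 1) && (l == 0) then Complex (x / 2) (y / 2)
    else ((1 - z) / 2)%:C.

(* The one-qubit state space S, parameterized by Bloch vectors. *)
Definition is_state (v : 'rV[R]_3) : Prop := enorm3 v <= 1.
Definition pure_state (v : 'rV[R]_3) : Prop :=
  is_state v /\ \rank (density v) = 1%N.
Definition faithful_state (v : 'rV[R]_3) : Prop :=
  is_state v /\ \rank (density v) = 2%N.

(* Functional calculus of a 2x2 Hermitian matrix M: apply f to the
   eigenvalues t +- del in the spectral decomposition
   M = (t+del) P+ + (t-del) P-,  P+ = (M - (t-del)) / (2 del),
   P- = ((t+del) - M) / (2 del)  (or M = t I when del = 0). *)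
Definition mfun (f : R -> R) (M : 'M[R[i]]_2) : 'M[R[i]]_2 :=
  let a := complex.Re (M 0 0) in let d := complex.Re (M 1 1) in let b := M 0 1 in
  let t := (a + d) / 2 in
  let del := Num.sqrt (((a - d) / 2) ^+ 2 + (complex.Re b) ^+ 2 + (complex.Im b) ^+ 2) in
  if del == 0 then (f t)%:C%:M
  else ((f (t + del)) / (2 * del))%:C *: (M - (t - del)%:C%:M)
     + ((f (t - del)) / (2 * del))%:C *: ((t + del)%:C%:M - M).

Definition xlnx (x : R) : R := if x == 0 then 0 else x * ln x.

(* Quantum divergence D(sig || rho) = Tr sig (log sig - log rho),
   with Tr sig log sig computed as Tr (eta(sig)), eta(x) = x log x, 0 log 0 = 0. *)
Definition qdiv (sig rho : 'M[R[i]]_2) : R :=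
  complex.Re (\tr (mfun xlnx sig) - \tr (sig *m mfun (@ln R) rho)).

(* Fubini-Study distance (for pure states): cos d = sqrt (Tr rho sig), d in [0, pi/2]. *)
Definition dFS (rho sig : 'M[R[i]]_2) : R :=
  acos (Num.sqrt (complex.Re (\tr (rho *m sig)))).

Definition dB (rho sig : 'M[R[i]]_2) : R :=
  Num.sqrt (1 - complex.Re (\tr (mfun Num.sqrt
      (mfun Num.sqrt sig *m rho *m mfun Num.sqrt sig)))).

Definition setliminf1 (T : Type) (F : R -> set T) : set T :=
  [set x | \forall a \near (1:R)^'-, F a x].
Definition setlimsup1 (T : Type) (F : R -> set T) : set T :=
  [set x | ~ (\forall a \near (1:R)^'-, ~ F a x)].
Definition setlim1_exists (T : Type) (F : R -> set T) : Prop :=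
  setliminf1 F = setlimsup1 F.
Definition setlim1 (T : Type) (F : R -> set T) : set T := setliminf1 F.

Definition shrink (a : R) (sig : 'M[R[i]]_2) : 'M[R[i]]_2 :=
  (2^-1)%:C%:M + a%:C *: (sig - (2^-1)%:C%:M).

End Qubit.

From Pilot Require Import Defs.
From HB Require Import structures.
From mathcomp Require Import all_boot all_order all_algebra.
From mathcomp Require Import all_classical all_reals all_analysis.
From mathcomp Require Import complex.
From mathcomp Require Import ring lra.
Set Implicit Arguments. Unset Strict Implicit. Unset Printing Implicit Defensive.
Import Order.TTheory GRing.Theory Num.Theory ComplexField.
Import numFieldNormedType.Exports.
Local Open Scope classical_set_scope.
Local Open Scope ring_scope.
Local Notation Re := complex.Re.
Local Notation Im := complex.Im.

(* A Hermitian 2x2 matrix is c I + u.sigma with c real and u in R^3; its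
   eigenvalues are c +- |u|, so a matrix function of it is again of this form,
   determined by f (c + |u|) and f (c - |u|).  In this form, for unit sites s_j
   and a pure state v, each of the four distances from v to s_j is a strictly
   decreasing function of v.s_j, while for a faithful v both divergences
   between rho_v and sigma_j(a) are affine in v.s_j with a negative slope (or
   constant in j when v = 0).  So every cell is { v | v.s_j <= v.s_i for all j }
   on the sphere or in the open ball, independently of a, and the closure of
   the open-ball cell meets the sphere in the spherical cell because t v -> v
   as t -> 1-. *)

Section ComplexParts.
Variable R : realType.
Local Open Scope complex_scope.
Implicit Types x y : R[i].

Lemma ReD x y : Re (x + y) = Re x + Re y. Proof. by case: x => a b; case: y => c d /=. Qed.
Lemma ImD x y : Im (x + y) = Im x + Im y. Proof. by case: x => a b; case: y => c d /=. Qed.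
Lemma ReN x : Re (- x) = - Re x. Proof. by case: x => a b /=. Qed.
Lemma ImN x : Im (- x) = - Im x. Proof. by case: x => a b /=. Qed.
Lemma ReM x y : Re (x * y) = Re x * Re y - Im x * Im y.
Proof. by case: x => a b; case: y => c d /=. Qed.
Lemma ImM x y : Im (x * y) = Re x * Im y + Im x * Re y.
Proof. by case: x => a b; case: y => c d /=; ring. Qed.

Lemma complexP x y : Re x = Re y -> Im x = Im y -> x = y.
Proof. by case: x; case: y => /= a b c d -> ->. Qed.

End ComplexParts.

Local Ltac push_Re_Im := rewrite ?(ReD, ImD, ReN, ImN, ReM, ImM) /=.
Local Ltac complex_eq := rewrite ?(mulr0n, mulr1n); apply: complexP; push_Re_Im.

Lemma ord2P (k : 'I_2) : k = 0 \/ k = 1.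
Proof. by case: k => [[|[|k]]] hk; [left|right|]; try exact/val_inj. Qed.

Lemma matrix2P (T : Type) (M N : 'M[T]_2) :
  M 0 0 = N 0 0 -> M 0 1 = N 0 1 -> M 1 0 = N 1 0 -> M 1 1 = N 1 1 -> M = N.
Proof.
move=> h00 h01 h10 h11; apply/matrixP => k l.
by case: (ord2P k) => ->; case: (ord2P l) => ->.
Qed.

Lemma lift0_ord1 : lift ord0 (ord0 : 'I_1) = 1 :> 'I_2. Proof. exact/val_inj. Qed.
Lemma ord0_2 : ord0 = 0 :> 'I_2. Proof. exact/val_inj. Qed.

Section Matrix2.
Variable K : pzSemiRingType.
Implicit Types M N : 'M[K]_2.

Lemma mxtrace2 M : \tr M = M 0 0 + M 1 1.
Proof. by rewrite /mxtrace !big_ord_recl big_ord0 addr0 lift0_ord1 ord0_2. Qed.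

Lemma mulmx2E M N k l : (M *m N) k l = M k 0 * N 0 l + M k 1 * N 1 l.
Proof. by rewrite !mxE !big_ord_recl big_ord0 addr0 lift0_ord1 ord0_2. Qed.

End Matrix2.

Lemma det_mx2 (K : comNzRingType) (M : 'M[K]_2) :
  \det M = M 0 0 * M 1 1 - M 0 1 * M 1 0.
Proof.
rewrite (expand_det_row _ 0) !big_ord_recl big_ord0 addr0 /cofactor !det_mx11 !mxE.
have lift1_ord0 : lift 1 (0 : 'I_1) = 0 :> 'I_2 by exact/val_inj.
by rewrite lift0_ord1 ord0_2 lift1_ord0 expr0 expr1 mul1r mulN1r mulrN.
Qed.

Section Vectors.
Variable R : realType.
Implicit Types (u v w : 'rV[R]_3) (k : R).

Lemma dot3E u w : dot3 u w = u 0 0 * w 0 0 + u 0 1 * w 0 1 + u 0 2%:R * w 0 2%:R.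
Proof.
rewrite /dot3 !big_ord_recl big_ord0 addr0 addrA.
by congr (_ * _ + _ * _ + _ * _); congr (_ _ _); apply: val_inj.
Qed.

Lemma dot3C u w : dot3 u w = dot3 w u.
Proof. by rewrite !dot3E; ring. Qed.

Lemma dot3Zl k u w : dot3 (k *: u) w = k * dot3 u w.
Proof. by rewrite !dot3E !mxE; ring. Qed.

Lemma dot3Zr k u w : dot3 u (k *: w) = k * dot3 u w.
Proof. by rewrite dot3C dot3Zl dot3C. Qed.

Lemma dot3_ge0 u : 0 <= dot3 u u.
Proof. by rewrite dot3E -!expr2 !addr_ge0 ?sqr_ge0. Qed.

Lemma dot3_eq0l u : dot3 u u = 0 -> forall w, dot3 u w = 0.
Proof.
move=> + w; rewrite !dot3E => u0.
have [-> -> ->] : [/\ u 0 0 = 0, u 0 1 = 0 & u 0 2%:R = 0] by split; nra.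
by ring.
Qed.

Lemma dot3_sqrB u w : dot3 (u - w) (u - w) = dot3 u u - 2 * dot3 u w + dot3 w w.
Proof. by rewrite !dot3E !mxE; ring. Qed.

Lemma dot3_unit_itv u w : dot3 u u = 1 -> dot3 w w = 1 -> -1 <= dot3 u w <= 1.
Proof.
move=> u1 w1; have := dot3_ge0 (u - w); have := dot3_ge0 (u - (-1) *: w).
by rewrite !dot3_sqrB !dot3Zl !dot3Zr u1 w1 => *; apply/andP; split; lra.
Qed.

Lemma enorm3_sqr u : enorm3 u ^+ 2 = dot3 u u.
Proof. exact/sqr_sqrtr/dot3_ge0. Qed.

Lemma enorm3_eq1 u : enorm3 u = 1 <-> dot3 u u = 1.
Proof. by split=> [u1|u1]; [rewrite -enorm3_sqr u1 expr1n | rewrite /enorm3 u1 sqrtr1]. Qed.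

Lemma enorm3_le1 u : (enorm3 u <= 1) = (dot3 u u <= 1).
Proof. by rewrite /enorm3 -{1}sqrtr1 ler_sqrt. Qed.

Lemma enorm3Z k u : 0 <= k -> enorm3 (k *: u) = k * enorm3 u.
Proof.
move=> k0; rewrite /enorm3 dot3Zl dot3Zr mulrA -expr2.
by rewrite sqrtrM ?sqr_ge0 // sqrtr_sqr ger0_norm.
Qed.

Lemma dot3_continuous w : continuous (fun v : 'rV[R]_3 => dot3 v w).
Proof.
have coordM (l : 'I_3) : continuous (fun v : 'rV[R]_3 => v 0 l * w 0 l).
  move=> v; apply: (@continuousM _ _ (fun v : 'rV[R]_3 => v 0 l) (fun=> w 0 l) v).
    exact: coord_continuous.
  exact: cst_continuous.
have -> : (@dot3 R)^~ w = (fun v => v 0 0 * w 0 0) +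
    (fun v => v 0 1 * w 0 1) + (fun v => v 0 2%:R * w 0 2%:R).
  by apply/funext => v; rewrite dot3E.
by move=> v; apply: (@continuousD _ _ _ (_ + _) _ v);
  [apply: (@continuousD _ _ _ _ _ v)|]; exact: coordM.
Qed.

End Vectors.

Lemma sqrtr_le1 (R : rcfType) (x : R) : x <= 1 -> Num.sqrt x <= 1.
Proof. by move=> x1; rewrite -[leRHS]sqrtr1 ler_sqrt. Qed.

Lemma ler_acos (R : realType) (x y : R) : -1 <= x <= 1 -> -1 <= y <= 1 ->
  (acos x <= acos y) = (y <= x).
Proof.
move=> x1 y1.
have x_pi : acos x \in `[0, pi] by rewrite in_itv /= acos_ge0 // acos_lepi.
have y_pi : acos y \in `[0, pi] by rewrite in_itv /= acos_ge0 // acos_lepi.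
by rewrite !leNgt -(ltr_cos y_pi x_pi) !acosK // in_itv.
Qed.

Section BlochMatrix.
Variable R : realType.
Local Open Scope complex_scope.
Implicit Types (c a : R) (u v w : 'rV[R]_3).

Definition bloch_mx c u : 'M[R[i]]_2 :=
  \matrix_(k < 2, l < 2)
    if (k == 0) && (l == 0) then (c + u 0 2%:R)%:C
    else if (k == 0) && (l == 1) then Complex (u 0 0) (- u 0 1)
    else if (k == 1) && (l == 0) then Complex (u 0 0) (u 0 1)
    else (c - u 0 2%:R)%:C.

Lemma bloch_mx00 c u : bloch_mx c u 0 0 = (c + u 0 2%:R)%:C. Proof. by rewrite mxE. Qed.
Lemma bloch_mx01 c u : bloch_mx c u 0 1 = Complex (u 0 0) (- u 0 1). Proof. by rewrite mxE. Qed.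
Lemma bloch_mx10 c u : bloch_mx c u 1 0 = Complex (u 0 0) (u 0 1). Proof. by rewrite mxE. Qed.
Lemma bloch_mx11 c u : bloch_mx c u 1 1 = (c - u 0 2%:R)%:C. Proof. by rewrite mxE. Qed.

Definition bloch_mxE := (bloch_mx00, bloch_mx01, bloch_mx10, bloch_mx11).

Lemma density_bloch v : density v = bloch_mx 2^-1 (2^-1 *: v).
Proof. by apply: matrix2P; rewrite !bloch_mxE !mxE /=; complex_eq; field. Qed.

Lemma shrink_bloch a c u :
  shrink a (bloch_mx c u) = bloch_mx (2^-1 + a * (c - 2^-1)) (a *: u).
Proof. by apply: matrix2P; rewrite /shrink !mxE /=; complex_eq; ring. Qed.

Lemma shrink_density a v : shrink a (density v) = bloch_mx 2^-1 ((a / 2) *: v).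
Proof.
by rewrite density_bloch shrink_bloch scalerA subrr mulr0 addr0 mulrC.
Qed.

Lemma tr_bloch c u : Re (\tr (bloch_mx c u)) = 2 * c.
Proof. by rewrite mxtrace2 !bloch_mxE; push_Re_Im; ring. Qed.

Lemma tr_bloch_mul c u c' u' :
  Re (\tr (bloch_mx c u *m bloch_mx c' u')) = 2 * (c * c' + dot3 u u').
Proof. by rewrite mxtrace2 !mulmx2E !bloch_mxE dot3E; push_Re_Im; ring. Qed.

Lemma bloch_mx_sandwich c u c' u' :
  bloch_mx c u *m bloch_mx c' u' *m bloch_mx c u =
  bloch_mx (c ^+ 2 * c' + 2 * c * dot3 u u' + c' * dot3 u u)
           ((2 * (c * c' + dot3 u u')) *: u + (c ^+ 2 - dot3 u u) *: u').
Proof.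
by apply: matrix2P; rewrite !mulmx2E !bloch_mxE !mxE !dot3E; complex_eq; ring.
Qed.

Lemma det_bloch c u : \det (bloch_mx c u) = (c ^+ 2 - dot3 u u)%:C.
Proof. by rewrite det_mx2 !bloch_mxE dot3E; complex_eq; ring. Qed.

Lemma rank_bloch c u : c != 0 ->
  \rank (bloch_mx c u) = if c ^+ 2 == dot3 u u then 1%N else 2%N.
Proof.
move=> c0.
have unitE : (bloch_mx c u \in unitmx) = (c ^+ 2 != dot3 u u).
  by rewrite unitmxE unitfE det_bloch fmorph_eq0 subr_eq0.
case: ifP => [/eqP cu|cu]; last by rewrite mxrank_unit // unitE cu.
have : ~~ (bloch_mx c u \in unitmx) by rewrite unitE cu eqxx.
rewrite -row_free_unit /row_free.
have : bloch_mx c u != 0.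
  apply: contra_neq c0 => M0; have := tr_bloch c u; rewrite M0 mxtrace0 /=.
  by move/esym/eqP; rewrite mulf_eq0 pnatr_eq0 => /eqP.
rewrite -mxrank_eq0; move: (rank_leq_row (bloch_mx c u)).
by case: (\rank _) => [|[|[|r]]].
Qed.

(* For [u = 0] the junk value [x / 0 = 0] makes the formula degenerate to
   the scalar matrix [f c]. *)
Lemma mfun_bloch f c u : let r := enorm3 u in
  Defs.mfun f (bloch_mx c u) =
  bloch_mx ((f (c + r) + f (c - r)) / 2) ((f (c + r) - f (c - r)) / (2 * r) *: u).
Proof.
move=> r; rewrite /Defs.mfun !bloch_mxE /=.
have -> : (c + u 0 2%:R + (c - u 0 2%:R)) / 2 = c by field.
have -> : ((c + u 0 2%:R - (c - u 0 2%:R)) / 2) ^+ 2 + u 0 0 ^+ 2 + (- u 0 1) ^+ 2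
    = dot3 u u by rewrite dot3E; field.
rewrite -/(enorm3 u) -/r; case: ifP => [/eqP r0|r0].
  by apply: matrix2P; rewrite !bloch_mxE r0 mulr0 invr0 mulr0 !mxE /= ?addr0 ?subr0;
    complex_eq; field.
by apply: matrix2P; rewrite !mxE /=; complex_eq; field; rewrite r0.
Qed.

Lemma tr_mfun_bloch f c u : let r := enorm3 u in
  Re (\tr (Defs.mfun f (bloch_mx c u))) = f (c + r) + f (c - r).
Proof. by rewrite mfun_bloch tr_bloch; field. Qed.

Lemma tr_bloch_mul_mfun f c' u' c u : let r := enorm3 u in
  Re (\tr (bloch_mx c' u' *m Defs.mfun f (bloch_mx c u))) =
  c' * (f (c + r) + f (c - r)) + (f (c + r) - f (c - r)) / r * dot3 u' u.
Proof.
move=> r; rewrite mfun_bloch tr_bloch_mul dot3Zr invfM.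
by set ri := r^-1; field.
Qed.

Lemma rank_density v : \rank (density v) = if dot3 v v == 1 then 1%N else 2%N.
Proof.
rewrite density_bloch rank_bloch ?invr_eq0 ?pnatr_eq0 // dot3Zl dot3Zr mulrA.
have -> : (2^-1 : R) ^+ 2 = 2^-1 * 2^-1 by rewrite expr2.
by rewrite -[X in X == _]mulr1 (inj_eq (mulfI _)) ?mulf_neq0 ?invr_eq0 ?pnatr_eq0 // eq_sym.
Qed.

Lemma pure_stateE v : pure_state v <-> dot3 v v = 1.
Proof.
rewrite /pure_state /is_state enorm3_le1 rank_density.
by split=> [[_]|v1]; [case: eqP | rewrite v1 eqxx lexx].
Qed.

Lemma faithful_stateE v : faithful_state v <-> dot3 v v < 1.
Proof.
rewrite /faithful_state /is_state enorm3_le1 rank_density lt_neqAle.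
by split=> [[-> /=]|/andP[/negbTE -> ->]]; [case: eqP|].
Qed.

Lemma dFS_density v w :
  dFS (density v) (density w) = acos (Num.sqrt ((1 + dot3 v w) / 2)).
Proof.
rewrite /dFS !density_bloch tr_bloch_mul dot3Zl dot3Zr.
by congr (acos (Num.sqrt _)); field.
Qed.

(* The eigenvalues 0 and 1 of a pure state are fixed by the square root. *)
Lemma sqrt_density_pure w : dot3 w w = 1 -> Defs.mfun Num.sqrt (density w) = density w.
Proof.
move=> /enorm3_eq1 w1.
rewrite density_bloch mfun_bloch enorm3Z ?invr_ge0 ?ler0n // w1 mulr1 subrr.
have -> : 2^-1 + 2^-1 = 1 :> R by field.
rewrite sqrtr1 sqrtr0 addr0 subr0 scalerA.
by congr bloch_mx; [field | congr (_ *: _); field].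
Qed.

Lemma dB_density v w : dot3 w w = 1 -> -1 <= dot3 v w ->
  dB (density v) (density w) = Num.sqrt (1 - Num.sqrt ((1 + dot3 v w) / 2)).
Proof.
move=> w1 vw; rewrite /dB sqrt_density_pure // !density_bloch bloch_mx_sandwich.
rewrite !dot3Zl !dot3Zr w1 [dot3 w v]dot3C.
set t := (1 + dot3 v w) / 2.
have t0 : 0 <= t / 2 by rewrite /t; apply: divr_ge0 => //; apply: divr_ge0; lra.
rewrite (_ : bloch_mx _ _ = bloch_mx (t / 2) ((t / 2) *: w)); last first.
  by congr bloch_mx; [|apply/rowP => k; rewrite !mxE]; rewrite /t; field.
rewrite tr_mfun_bloch enorm3Z // (enorm3_eq1 w).2 // mulr1 subrr sqrtr0 addr0.
by congr (Num.sqrt (1 - Num.sqrt _)); field.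
Qed.

Lemma ler_dFS_density v w1 w2 : dot3 v v = 1 -> dot3 w1 w1 = 1 -> dot3 w2 w2 = 1 ->
  (dFS (density v) (density w1) <= dFS (density v) (density w2)) = (dot3 v w2 <= dot3 v w1).
Proof.
move=> v1 w11 w21.
have /andP[a1 a2] := dot3_unit_itv v1 w11; have /andP[b1 b2] := dot3_unit_itv v1 w21.
have sqrt_itv d : -1 <= d <= 1 -> -1 <= Num.sqrt ((1 + d) / 2) <= 1.
  case/andP=> d1 d2; apply/andP; split; last by apply: sqrtr_le1; lra.
  exact: le_trans (lerN10 _) (sqrtr_ge0 _).
rewrite !dFS_density ler_acos ?sqrt_itv ?a1 ?a2 ?b1 ?b2 // ler_sqrt; last lra.
by apply/idP/idP; lra.
Qed.

Lemma ler_dB_density v w1 w2 : dot3 v v = 1 -> dot3 w1 w1 = 1 -> dot3 w2 w2 = 1 ->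
  (dB (density v) (density w1) <= dB (density v) (density w2)) = (dot3 v w2 <= dot3 v w1).
Proof.
move=> v1 w11 w21.
have /andP[a1 a2] := dot3_unit_itv v1 w11; have /andP[b1 b2] := dot3_unit_itv v1 w21.
have sqrt_le1 : Num.sqrt ((1 + dot3 v w2) / 2) <= 1 by apply: sqrtr_le1; lra.
rewrite !dB_density // ler_sqrt; last lra.
by rewrite lerD2l lerN2 ler_sqrt; [apply/idP/idP; lra | lra].
Qed.

Lemma ler_acos_dot3 v w1 w2 : dot3 v v = 1 -> dot3 w1 w1 = 1 -> dot3 w2 w2 = 1 ->
  (acos (dot3 v w1) <= acos (dot3 v w2)) = (dot3 v w2 <= dot3 v w1).
Proof. by move=> v1 w11 w21; rewrite ler_acos // dot3_unit_itv. Qed.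

Lemma ler_enorm3_sub v w1 w2 : dot3 v v = 1 -> dot3 w1 w1 = 1 -> dot3 w2 w2 = 1 ->
  (enorm3 (v - w1) <= enorm3 (v - w2)) = (dot3 v w2 <= dot3 v w1).
Proof.
move=> v1 w11 w21; rewrite /enorm3 ler_sqrt ?dot3_ge0 // !dot3_sqrB v1 w11 w21.
by apply/idP/idP; lra.
Qed.

Lemma qdiv_density_shrink a v s : 0 < a < 1 -> dot3 s s = 1 ->
  qdiv (density v) (shrink a (density s)) =
  Re (\tr (Defs.mfun (@xlnx R) (density v))) - (ln ((1 + a) / 2) + ln ((1 - a) / 2)) / 2
  - (ln ((1 + a) / 2) - ln ((1 - a) / 2)) / 2 * dot3 v s.
Proof.
move=> /andP[a0 a1] s1; rewrite /qdiv ReD ReN shrink_density.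
rewrite [in _ *m _]density_bloch tr_bloch_mul_mfun enorm3Z; last lra.
rewrite (enorm3_eq1 s).2 // mulr1 dot3Zl dot3Zr.
have -> : 2^-1 + a / 2 = (1 + a) / 2 by field.
have -> : 2^-1 - a / 2 = (1 - a) / 2 by field.
by field; lra.
Qed.

Lemma ler_qdiv_density_shrink a v s1 s2 : 0 < a < 1 ->
  dot3 s1 s1 = 1 -> dot3 s2 s2 = 1 ->
  (qdiv (density v) (shrink a (density s1)) <= qdiv (density v) (shrink a (density s2)))
  = (dot3 v s2 <= dot3 v s1).
Proof.
move=> a01 s11 s21; rewrite !qdiv_density_shrink // lerD2l lerN2 ler_pM2l //.
case/andP: a01 => a0 a1.
by rewrite divr_gt0 // subr_gt0 ltr_ln ?posrE; lra.
Qed.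

Lemma qdiv_shrink_density a v s : 0 < a < 1 -> dot3 s s = 1 -> let r := enorm3 v in
  qdiv (shrink a (density s)) (density v) =
  xlnx ((1 + a) / 2) + xlnx ((1 - a) / 2) - (ln ((1 + r) / 2) + ln ((1 - r) / 2)) / 2
  - a * (ln ((1 + r) / 2) - ln ((1 - r) / 2)) / (2 * r) * dot3 v s.
Proof.
move=> /andP[a0 a1] s1 r; rewrite /qdiv ReD ReN shrink_density tr_mfun_bloch.
rewrite density_bloch tr_bloch_mul_mfun !enorm3Z ?invr_ge0 ?ler0n //; last lra.
rewrite -/r (enorm3_eq1 s).2 // mulr1 dot3Zl dot3Zr dot3C.
have -> : 2^-1 + a / 2 = (1 + a) / 2 by field.
have -> : 2^-1 - a / 2 = (1 - a) / 2 by field.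
have -> : 2^-1 + 2^-1 * r = (1 + r) / 2 by field.
have -> : 2^-1 - 2^-1 * r = (1 - r) / 2 by field.
by rewrite !invfM invrK; set ri := r^-1; field.
Qed.

Lemma ler_qdiv_shrink_density a v s1 s2 : 0 < a < 1 -> dot3 v v < 1 ->
  dot3 s1 s1 = 1 -> dot3 s2 s2 = 1 ->
  (qdiv (shrink a (density s1)) (density v) <= qdiv (shrink a (density s2)) (density v))
  = (dot3 v s2 <= dot3 v s1).
Proof.
move=> a01 v1 s11 s21; rewrite !qdiv_shrink_density // lerD2l lerN2.
have [r0|r_neq0] := eqVneq (enorm3 v) 0.
  have v0 : dot3 v v = 0 by rewrite -enorm3_sqr r0 expr0n.
  by rewrite !(dot3_eq0l v0) !mulr0 lexx.
have r_gt0 : 0 < enorm3 v by rewrite lt_neqAle eq_sym r_neq0 sqrtr_ge0.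
have r_lt1 : enorm3 v < 1 by rewrite /enorm3 -sqrtr1 ltr_sqrt.
case/andP: a01 => a0 a1; rewrite ler_pM2l // divr_gt0 ?mulr_gt0 //.
by rewrite subr_gt0 ltr_ln ?posrE; lra.
Qed.

End BlochMatrix.

Section SetLimits.
Variable R : realType.

Lemma near_left1_itv : \forall a \near (1 : R)^'-, 0 < a < 1.
Proof.
near=> a; apply/andP; split.
- by near: a; exact: nbhs_left_gt.
- by near: a; exact: nbhs_left_lt.
Unshelve. all: end_near.
Qed.

Lemma near_left1_ex (P : R -> Prop) :
  (\forall a \near (1 : R)^'-, P a) -> exists a, 0 < a < 1 /\ P a.
Proof.
move=> Pnear; have := filter_ex (filterI (@near_left1_itv) Pnear).
by move=> /(_ (at_left_proper_filter _)) [a]; exists a.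
Qed.

Lemma setlim1_eventually_const (T : Type) (F : R -> set T) (C : set T) :
  (\forall a \near (1 : R)^'-, F a = C) -> setliminf1 F = C /\ setlimsup1 F = C.
Proof.
move=> FC; split; apply/seteqP; split => x /=.
- by move=> Fx; have [a [_ [<-]]] := near_left1_ex (filterI FC Fx).
- by move=> Cx; apply: filterS FC => a ->.
- move=> nFx; apply: contrapT => nCx; apply: nFx.
  by apply: filterS FC => a ->.
- by move=> Cx nFx; have [a [_ [-> ]]] := near_left1_ex (filterI FC nFx).
Qed.

Lemma scale_cvg_left1 (v : 'rV[R]_3) : (fun t : R => t *: v) @ (1 : R)^'- --> v.
Proof.
rewrite -[X in _ --> X]scale1r.
by apply: (@cvgZ _ _ _ _ _ id (fun=> v)); [exact: cvg_at_left_filter | exact: cvg_cst].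
Qed.

End SetLimits.

Section VoronoiCells.
Variables (R : realType) (n : nat) (s : 'I_n -> 'rV[R]_3) (i : 'I_n).

Definition dot_cell (P : set 'rV[R]_3) :=
  [set v | P v /\ forall j, dot3 v (s j) <= dot3 v (s i)].

Lemma cell_dotE (P Q : set 'rV[R]_3) (d : 'rV[R]_3 -> 'rV[R]_3 -> R) :
  (forall v, P v <-> Q v) ->
  (forall v j, Q v -> (d v (s i) <= d v (s j)) = (dot3 v (s j) <= dot3 v (s i))) ->
  [set v | P v /\ forall j, d v (s i) <= d v (s j)] = dot_cell Q.
Proof.
move=> PQ dE; apply/seteqP; split => v [Pv hv].
- by have Qv := (PQ v).1 Pv; split => // j; rewrite -dE.
- by split; [exact/PQ | move=> j; rewrite dE].
Qed.

Lemma closed_dot_halfspace j : closed [set v : 'rV[R]_3 | dot3 v (s j) <= dot3 v (s i)].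
Proof.
have -> : [set v : 'rV[R]_3 | dot3 v (s j) <= dot3 v (s i)] =
    (fun v => dot3 v (s i) - dot3 v (s j)) @^-1` [set x | 0 <= x].
  by apply/seteqP; split => v /=; rewrite subr_ge0.
apply: preimage_closed; last exact: closed_ge.
by move=> v _; apply: (@continuousB _ _ _ (fun v => dot3 v (s i))); exact: dot3_continuous.
Qed.

Lemma closure_dot_cell :
  closure (dot_cell [set v | dot3 v v < 1]) `&` [set v | dot3 v v = 1] =
  dot_cell [set v | dot3 v v = 1].
Proof.
apply/seteqP; split => v.
- case=> clv v1; split => // j.
  have : closure [set w | dot3 w (s j) <= dot3 w (s i)] v.
    by apply: closureS clv => w [_]; apply.
  by rewrite -(closure_id _).1 //; exact: closed_dot_halfspace.
- case=> v1 hv; split => // B /scale_cvg_left1 Bv.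
  have [t [/andP[t0 t1] Btv]] := near_left1_ex Bv.
  exists (t *: v); split => //; split.
    by rewrite /= dot3Zl dot3Zr v1; nra.
  by move=> j; rewrite !dot3Zl ler_pM2l.
Qed.

End VoronoiCells.

Theorem mainTheorem1 (R : realType) (n : nat) (s : 'I_n -> 'rV[R]_3)
  (hs : forall i, enorm3 (s i) = 1) :
  let A := fun (i : 'I_n) (a : R) =>
    [set v | faithful_state v /\ forall j : 'I_n,
       qdiv (density v) (shrink a (density (s i)))
         <= qdiv (density v) (shrink a (density (s j)))] in
  let B := fun (i : 'I_n) (a : R) =>
    [set v | faithful_state v /\ forall j : 'I_n,
       qdiv (shrink a (density (s i))) (density v)
         <= qdiv (shrink a (density (s j))) (density v)] in
  forall i : 'I_n,
    setlim1_exists (A i) /\ setlim1_exists (B i) /\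
    let V1 := [set v | pure_state v /\ forall j : 'I_n,
                 dFS (density v) (density (s i)) <= dFS (density v) (density (s j))] in
    let V2 := [set v | pure_state v /\ forall j : 'I_n,
                 dB (density v) (density (s i)) <= dB (density v) (density (s j))] in
    let V3 := [set v | pure_state v /\ forall j : 'I_n,
                 acos (dot3 v (s i)) <= acos (dot3 v (s j))] in
    let V4 := [set v | pure_state v /\ forall j : 'I_n,
                 enorm3 (v - s i) <= enorm3 (v - s j)] in
    let V5 := closure (setlim1 (A i)) `&` [set v | pure_state v] in
    let V6 := closure (setlim1 (B i)) `&` [set v | pure_state v] in
    [/\ V1 = V2, V2 = V3, V3 = V4, V4 = V5 & V5 = V6].
Proof.
move=> A B i; have s1 j : dot3 (s j) (s j) = 1 by exact/enorm3_eq1/hs.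
pose ball_cell := dot_cell s i [set v | dot3 v v < 1].
pose sphere_cell := dot_cell s i [set v | dot3 v v = 1].
have hA : \forall a \near (1 : R)^'-, A i a = ball_cell.
  near=> a; have a01 : 0 < a < 1 by near: a; exact: near_left1_itv.
  apply: (cell_dotE (d := fun v w => qdiv (density v) (shrink a (density w))))
    => [v|v j v1]; first exact: faithful_stateE.
  exact: ler_qdiv_density_shrink.
have hB : \forall a \near (1 : R)^'-, B i a = ball_cell.
  near=> a; have a01 : 0 < a < 1 by near: a; exact: near_left1_itv.
  apply: (cell_dotE (d := fun v w => qdiv (shrink a (density w)) (density v)))
    => [v|v j v1]; first exact: faithful_stateE.
  exact: ler_qdiv_shrink_density.
have [Ainf Asup] := setlim1_eventually_const hA.
have [Binf Bsup] := setlim1_eventually_const hB.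
split; first by rewrite /setlim1_exists Ainf Asup.
split; first by rewrite /setlim1_exists Binf Bsup.
move=> V1 V2 V3 V4 V5 V6.
have pure_cell (d : 'rV[R]_3 -> 'rV[R]_3 -> R) : (forall v j, dot3 v v = 1 ->
      (d v (s i) <= d v (s j)) = (dot3 v (s j) <= dot3 v (s i))) ->
    [set v | pure_state v /\ forall j, d v (s i) <= d v (s j)] = sphere_cell.
  exact: (cell_dotE (@pure_stateE R)).
have pureE : [set v : 'rV[R]_3 | pure_state v] = [set v | dot3 v v = 1].
  by apply/seteqP; split => v /pure_stateE.
have -> : V1 = sphere_cell.
  by apply: (pure_cell (fun v w => dFS (density v) (density w))) => v j v1;
    exact: ler_dFS_density.
have -> : V2 = sphere_cell.
  by apply: (pure_cell (fun v w => dB (density v) (density w))) => v j v1;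
    exact: ler_dB_density.
have -> : V3 = sphere_cell.
  by apply: (pure_cell (fun v w => acos (dot3 v w))) => v j v1; exact: ler_acos_dot3.
have -> : V4 = sphere_cell.
  by apply: (pure_cell (fun v w => enorm3 (v - w))) => v j v1; exact: ler_enorm3_sub.
have -> : V5 = sphere_cell by rewrite /V5 /setlim1 Ainf pureE closure_dot_cell.
have -> : V6 = sphere_cell by rewrite /V6 /setlim1 Binf pureE closure_dot_cell.
by [].
Unshelve. all: end_near.
Qed.
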